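(* Let $d\geq 1$ and $r\geq 2$ be integers. Then $M(2r-1,r,d)\le d+1$.
   Context: All measures are probability measures on $\mathbb{R}^d$ absolutely continuous with respect to Lebesgue measure. A convex partition of $\mathbb{R}^d$ into $n$ parts is an ordered tuple $(K_1,\dots,K_n)$ of closed convex sets with union $\mathbb{R}^d$ and pairwise disjoint interiors (some parts may be empty). $M(n,r,d)$ is the largest integer $M$ such that for any $M$ measures $\mu_1,\dots,\mu_M$ on $\mathbb{R}^d$ there is a convex partition $(K_1,\dots,K_n)$ of $\mathbb{R}^d$ into $n$ parts and a map $\ell\colon[n]\to[r]$ with $\mu_j\big(\bigcup_{i\in\ell^{-1}(s)}K_i\big)=\tfrac1r$ for all $1\le j\le M$ and $1\le s\le r$. *)

(* R^d is rendered as 'rV[R]_d (row vectors) with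
   the library's (product) topology; its Borel sigma-algebra is the
   sigma-algebra generated by the open sets. *)
From HB Require Import structures.
From mathcomp Require Import all_boot all_order all_algebra.
From mathcomp Require Import all_classical all_reals all_analysis.
Set Implicit Arguments. Unset Strict Implicit. Unset Printing Implicit Defensive.
Import Order.TTheory GRing.Theory Num.Theory.
Import numFieldNormedType.Exports.
Local Open Scope classical_set_scope.
Local Open Scope ring_scope.

Section Defs.
Variables (R : realType) (d : nat).

Definition borelRd := g_sigma_algebraType (@open 'rV[R]_d).

Definition box (a b : 'rV[R]_d) : set 'rV[R]_d :=
  [set x | forall i, a ord0 i <= x ord0 i <= b ord0 i].
Definition box_vol (a b : 'rV[R]_d) : R :=
  \prod_(i < d) Num.max 0 (b ord0 i - a ord0 i).

Definition lebesgue_null (A : set 'rV[R]_d) : Prop :=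
  forall eps : R, 0 < eps -> exists a b : nat -> 'rV[R]_d,
    A `<=` \bigcup_k box (a k) (b k) /\
    (\sum_(0 <= k <oo) (box_vol (a k) (b k))%:E <= eps%:E)%E.

Definition abs_continuous (mu : probability borelRd R) : Prop :=
  forall A : set borelRd, measurable A -> lebesgue_null A -> mu A = 0%E.

Definition convex_set (K : set 'rV[R]_d) : Prop :=
  forall x y, K x -> K y -> forall t : R, 0 <= t <= 1 ->
    K ((1 - t) *: x + t *: y).

Definition convex_partition (n : nat) (K : 'I_n -> set 'rV[R]_d) : Prop :=
  [/\ forall i, closed (K i) /\ convex_set (K i),
      \bigcup_(i in [set: 'I_n]) K i = [set: 'rV[R]_d] &
      forall i j, i != j -> (interior (K i)) `&` (interior (K j)) = set0].

(* the property defining M(n,r,d): any M abs. continuous probability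
   measures admit a convex partition into n parts and a labelling
   l : [n] -> [r] equipartitioning every measure *)
Definition equipart_property (n r M : nat) : Prop :=
  forall mu : 'I_M -> probability borelRd R,
    (forall j, abs_continuous (mu j)) ->
    exists K : 'I_n -> set 'rV[R]_d, convex_partition K /\
    exists l : 'I_n -> 'I_r, forall (j : 'I_M) (s : 'I_r),
      mu j (\bigcup_(i in [set i | l i = s]) K i : set borelRd) = (r%:R^-1)%:E.

End Defs.

(* Take d + 2 uniform probability measures on cubes of side 1/(16 d^2): near
   the vertices e_1, ..., e_d and 0 of the standard simplex, and near its inner
   point (1/(2d), ..., 1/(2d)).  Every label class of an equipartition has
   positive measure, so with 2r - 1 parts and r labels some class is a single
   convex part K.  K meets each of the first d + 1 cubes, and points chosen
   there span a simplex whose vertex matrix is an l1-small perturbation of the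
   standard one, so its convex hull still contains the last cube.  Hence the
   last measure gives K mass 1, not 1/r. *)

From HB Require Import structures.
From mathcomp Require Import all_boot all_order all_algebra.
From mathcomp Require Import all_classical all_reals all_analysis.
From mathcomp Require Import measurable_realfun zify ring lra.
Set Implicit Arguments. Unset Strict Implicit. Unset Printing Implicit Defensive.
Import Order.TTheory GRing.Theory Num.Theory.
Import numFieldNormedType.Exports.
Local Open Scope classical_set_scope.
Local Open Scope ring_scope.

Section l1norm.
Variables (R : realFieldType) (d : nat).
Implicit Types s : 'rV[R]_d.

Definition l1norm s := \sum_i `|s ord0 i|.

Lemma l1norm_ge0 s : 0 <= l1norm s.
Proof. exact: sumr_ge0. Qed.

Lemma l1norm0 : l1norm 0 = 0.
Proof. by rewrite /l1norm big1 // => i _; rewrite mxE normr0. Qed.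

Lemma l1norm_eq0 s : l1norm s = 0 -> s = 0.
Proof.
move=> s0; apply/rowP => i; rewrite mxE; apply/normr0_eq0/eqP.
rewrite eq_le normr_ge0 andbT -s0 /l1norm (bigD1 i) //= lerDl.
exact: sumr_ge0.
Qed.

Lemma l1norm_le_coord_bound s (a b : R) : (forall i, a <= s ord0 i <= b) ->
  0 <= a -> l1norm s <= d%:R * b.
Proof.
move=> sab a0.
have -> : d%:R * b = \sum_(i < d) b by rewrite sumr_const card_ord mulr_natl.
by apply: ler_sum => i _; case/andP: (sab i) => ? ?; rewrite ger0_norm //; lra.
Qed.

End l1norm.

Section perturbed_identity.
Variables (R : realFieldType) (d : nat) (del : R) (E : 'M[R]_d).
Hypothesis E_small : forall k i, `|E k i| <= del.
Implicit Types s : 'rV[R]_d.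

Lemma perturbation_le s i : `|(s *m E) ord0 i| <= del * l1norm s.
Proof.
rewrite mxE; apply: le_trans (ler_norm_sum _ _ _) _.
rewrite /l1norm mulr_sumr; apply: ler_sum => k _.
by rewrite normrM mulrC ler_wpM2r.
Qed.

Lemma perturbed_coord s i : s ord0 i = (s *m (1%:M + E)) ord0 i - (s *m E) ord0 i.
Proof. by rewrite mulmxDr mulmx1 mxE addrK. Qed.

Lemma perturbed_coord_ge s i :
  (s *m (1%:M + E)) ord0 i - del * l1norm s <= s ord0 i.
Proof.
rewrite [leRHS]perturbed_coord lerD2l lerN2.
exact: le_trans (ler_norm _) (perturbation_le s i).
Qed.

Lemma l1norm_perturbed_ge s :
  (1 - d%:R * del) * l1norm s <= l1norm (s *m (1%:M + E)).
Proof.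
have : l1norm s <= \sum_i (`|(s *m (1%:M + E)) ord0 i| + del * l1norm s).
  apply: ler_sum => i _; rewrite {1}perturbed_coord.
  by apply: le_trans (ler_normB _ _) _; rewrite lerD2l perturbation_le.
rewrite big_split /= sumr_const card_ord -[_ *+ d]mulr_natl mulrA.
by rewrite mulrBl mul1r lerBlDr.
Qed.

Lemma perturbed_identity_unit : d%:R * del < 1 -> 1%:M + E \in unitmx.
Proof.
move=> small; rewrite -row_free_unit -kermx_eq0; apply/eqP/row_matrixP => k.
rewrite row0; apply: l1norm_eq0; apply/eqP; rewrite eq_le l1norm_ge0 andbT.
have := l1norm_perturbed_ge (row k (kermx (1%:M + E))).
rewrite -row_mul mulmx_ker row0 l1norm0 => h.
by rewrite -(pmulr_rle0 _ (_ : 0 < 1 - d%:R * del)) ?subr_gt0.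
Qed.

End perturbed_identity.

Lemma perturbed_simplex_hull (R : realFieldType) (d : nat) (del c : R)
    (x0 y : 'rV[R]_d) (x : 'I_d -> 'rV[R]_d) :
  0 <= del -> d%:R * del <= 1/16 -> 2 * del <= c -> d%:R * (c + del) <= 9/16 ->
  (forall i, 0 <= x0 ord0 i <= del) ->
  (forall k i, (k == i)%:R <= x k ord0 i <= (k == i)%:R + del) ->
  (forall i, c <= y ord0 i <= c + del) ->
  exists t : 'I_d -> R, [/\ forall k, 0 <= t k, \sum_k t k <= 1 &
    y = (1 - \sum_k t k) *: x0 + \sum_k t k *: x k].
Proof.
move=> del0 side_small mid_ge mid_small x0E xE yE.
(* [W] is a perturbation of the identity; the bound [l1norm t <= 3/5] on the
   solution of [t *m W = y - x0] keeps every [t k] above [c - 2 * del >= 0]. *)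
pose W : 'M[R]_d := \matrix_k (x k - x0).
have E_small k i : `|(W - 1%:M) k i| <= del.
  rewrite !mxE; case/andP: (x0E i) => ? ?; case/andP: (xE k i) => ? ?.
  by rewrite ler_norml; apply/andP; split; lra.
have WE : 1%:M + (W - 1%:M) = W by rewrite addrC subrK.
have [t tW] : exists t : 'rV[R]_d, t *m W = y - x0.
  exists ((y - x0) *m invmx W); rewrite mulmxKV // -WE.
  by apply: (perturbed_identity_unit (del := del)) => //; lra.
have zE i : c - del <= (y - x0) ord0 i <= c + del.
  by rewrite !mxE; case/andP: (x0E i) => ? ?; case/andP: (yE i) => ? ?; lra.
have z_l1 : l1norm (y - x0) <= 9/16.
  by apply: le_trans (l1norm_le_coord_bound zE _) mid_small; lra.
have t_l1 : l1norm t <= 3/5.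
  have := l1norm_perturbed_ge E_small t; rewrite WE tW.
  have := l1norm_ge0 t; move: (l1norm t) (d%:R * del) side_small => L a; nra.
have t_ge k : c - del - del * l1norm t <= t ord0 k.
  have := perturbed_coord_ge E_small t k; rewrite WE tW.
  by case/andP: (zE k) => ? ?; lra.
exists (fun k => t ord0 k); split.
- move=> k; have := t_ge k; have : del * l1norm t <= del * 1.
    by apply: ler_wpM2l => //; lra.
  by lra.
- apply: le_trans (_ : l1norm t <= 1); last by lra.
  by apply: ler_sum => k _; exact: ler_norm.
have -> : y = x0 + \sum_k t ord0 k *: (x k - x0).
  rewrite -[LHS](addrNK x0) addrC -tW mulmx_sum_row.
  by under eq_bigr do rewrite rowK.
under eq_bigr do rewrite scalerBr.
by rewrite sumrB -scaler_suml scalerBl scale1r addrA addrAC.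
Qed.

Lemma convex_set_affine_comb (R : realType) (d : nat) (K : set 'rV[R]_d) :
  convex_set K ->
  forall n (p : 'I_n -> 'rV[R]_d) (w : 'I_n -> R) p0,
  K p0 -> (forall k, K (p k)) -> (forall k, 0 <= w k) -> \sum_k w k <= 1 ->
  K ((1 - \sum_k w k) *: p0 + \sum_k w k *: p k).
Proof.
move=> cK; elim => [|n IH] p w p0 Kp0 Kp w0 w1.
  by rewrite !big_ord0 subr0 scale1r addr0.
rewrite !big_ord_recl /=; set a := w ord0; set S := \sum_(i < n) w (lift ord0 i).
have S0 : 0 <= S by apply: sumr_ge0.
have a0 : 0 <= a := w0 ord0.
have aS : a + S <= 1 by move: w1; rewrite big_ord_recl.
have IH' := IH (fun i => p (lift ord0 i)) (fun i => w (lift ord0 i)).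
have [S_lt1|S_ge1] := ltrP S 1; last first.
  have a_eq0 : a = 0 by apply/eqP; rewrite eq_le; apply/andP; split; lra.
  by rewrite a_eq0 add0r scale0r add0r; apply: IH' => //; rewrite -/S; lra.
(* Merge [p ord0] into the base point [(1 - b) *: p0 + b *: p ord0]. *)
pose b := a / (1 - S).
have b01 : 0 <= b <= 1.
  by rewrite divr_ge0 ?ler_pdivrMr ?subr_gt0 //=; lra.
have := IH' _ (cK _ _ Kp0 (Kp ord0) b b01) (fun i => Kp _) (fun i => w0 _) (ltW S_lt1).
congr K; rewrite addrA; congr (_ + _).
have S_neq1 : 1 - S != 0 by rewrite subr_eq0 gt_eqF.
by rewrite scalerDr !scalerA; congr (_ *: _ + _ *: _); rewrite -/S /b; field.
Qed.

Section uniform_cube.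
Variable R : realType.
Local Notation mR := (measurableTypeR R).

Definition unif01 := [the probability _ R of uniform_prob (@ltr01 R)].

Definition tuple_cons n (x : mR * n.-tuple mR) : n.+1.-tuple mR :=
  [tuple of x.1 :: x.2].

Lemma measurable_tuple_cons n : measurable_fun setT (@tuple_cons n).
Proof. exact: measurable_cons measurable_fst measurable_snd. Qed.

HB.instance Definition _ n :=
  isMeasurableFun.Build _ _ _ _ (@tuple_cons n) (@measurable_tuple_cons n).

Fixpoint unif_cube n : probability (n.-tuple mR) R :=
  match n with
  | 0 => [the probability _ _ of dirac [tuple]]
  | m.+1 =>
    [the probability _ _ of distribution (unif01 \x unif_cube m)%E (@tuple_cons m)]
  end.

Definition tbox n (a b : 'I_n -> R) : set (n.-tuple mR) :=
  [set t | forall i, a i <= (tnth t i : R) <= b i].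

Lemma measurable_tbox n (a b : 'I_n -> R) : measurable (tbox a b).
Proof.
have -> : tbox a b = \bigcap_(i in [set: 'I_n]) ((@tnth n mR)^~ i @^-1` `[a i, b i]).
  apply/seteqP; split => t /= tab i; last by have := tab i I; rewrite /= in_itv.
  by move=> _; rewrite /= in_itv; exact: tab.
apply: fin_bigcap_measurable; first exact: finite_finset.
move=> i _; rewrite -[X in measurable X]setTI.
by apply: (measurable_tnth i) => //; exact: measurable_itv.
Qed.

Lemma unif01_itv_le (a b : R) : (unif01 `[a, b]%classic <= (Num.max 0 (b - a))%:E)%E.
Proof.
apply: (@le_trans _ _ (\int[lebesgue_measure]_(x in `[a, b]) (cst 1%:E) x)%E).
  apply: ge0_le_integral => //.
  - by move=> x _; rewrite lee_fin uniform_pdf_ge0.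
  - apply/measurable_EFinP/measurable_funTS; exact: measurable_uniform_pdf.
  - by move=> x _; rewrite /uniform_pdf; case: ifPn => _; rewrite lee_fin ?subr0 ?invr1.
rewrite integral_cst //= mul1e lebesgue_measure_itv /=.
case: ifPn => ab; last by rewrite lee_fin le_max lexx.
by rewrite -EFinB lee_fin le_max lexx orbT.
Qed.

Lemma unif01_itv01 : unif01 `[0, 1]%classic = 1%E.
Proof. exact: integral_uniform_pdf1. Qed.

Lemma preimage_tuple_cons_tbox n (a b : 'I_n.+1 -> R) :
  @tuple_cons n @^-1` tbox a b =
  `[a ord0, b ord0] `*` tbox (fun i => a (lift ord0 i)) (fun i => b (lift ord0 i)).
Proof.
apply/seteqP; split => [[x t] tab|[x t] [/= + tab] i]; rewrite /=.
  split => [|i]; last by have := tab (lift ord0 i); rewrite /tuple_cons tnthS.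
  by have := tab ord0; rewrite /tuple_cons (tnth_nth x) /= in_itv.
by case: (unliftP ord0 i) => [j ->|-> ?]; rewrite /tuple_cons ?tnthS // (tnth_nth x).
Qed.

Lemma unif_cube_tbox_le n (a b : 'I_n -> R) :
  (unif_cube n (tbox a b) <= (\prod_(i < n) Num.max 0 (b i - a i))%:E)%E.
Proof.
elim: n a b => [|n IH] a b.
  by rewrite big_ord0 -(probability_setT (unif_cube 0)) le_measure ?inE //;
    exact: measurable_tbox.
rewrite big_ord_recl /= /distribution /pushforward /=.
rewrite preimage_tuple_cons_tbox product_measure1E //; last exact: measurable_tbox.
by rewrite EFinM; apply: lee_pmul => //; [exact: unif01_itv_le|exact: IH].
Qed.

Definition unit_tbox {n} : set (n.-tuple mR) := tbox (fun=> 0) (fun=> 1).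

Lemma unif_cube_unit_tbox n : unif_cube n unit_tbox = 1%E.
Proof.
elim: n => [|n IH].
  have -> : unit_tbox = [set: 0.-tuple mR] by apply/seteqP; split => // t _ [].
  exact: probability_setT.
rewrite /= /distribution /pushforward /=.
rewrite preimage_tuple_cons_tbox product_measure1E //; last exact: measurable_tbox.
transitivity (unif01 `[0%R, 1%R]%classic * 1)%E; last by rewrite mule1 unif01_itv01.
by congr (_ * _)%E; exact: IH.
Qed.

End uniform_cube.
Arguments unit_tbox {R n}.

Section borel_row.
Variables (R : realType) (d : nat).
Local Notation V := 'rV[R]_d.
Local Notation Q := {ffun 'I_d -> rat * rat}.

Definition rat_box (q : Q) : set V :=
  [set x | forall i, ratr (q i).1 < x ord0 i < ratr (q i).2].

Lemma open_bigcup_rat_box (U : set V) : open U ->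
  U = \bigcup_(q in [set: Q]) [set x | rat_box q `<=` U /\ rat_box q x].
Proof.
move=> oU; apply/seteqP; split => [x Ux|x [q _ [+ +]]]; last by apply.
case: (oU x Ux) => P Pn PU.
have coord_box i : exists qq : rat * rat, ratr qq.1 < x ord0 i < ratr qq.2 /\
    forall y : R, ratr qq.1 < y < ratr qq.2 -> P ord0 i y.
  have /nbhs_ballP [e /= e0 He] := Pn ord0 i.
  have [q1] : exists q : rat, ratr q \in `](x ord0 i - e), (x ord0 i)[.
    by apply: rat_in_itvoo; rewrite ltrBlDr ltrDl.
  have [q2] : exists q : rat, ratr q \in `](x ord0 i), (x ord0 i + e)[.
    by apply: rat_in_itvoo; rewrite ltrDl.
  rewrite !in_itv /= => /andP [? ?] /andP [? ?].
  exists (q1, q2); split; first by apply/andP.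
  move=> y /andP [? ?] /=; apply: He.
  by rewrite /ball /= ltr_distl; apply/andP; split; lra.
have [f fP] := choice coord_box.
exists [ffun i => f i] => //; split => [y yq|i]; rewrite ?ffunE; last by case: (fP i).
apply: PU => i j; rewrite (ord1 i).
by case: (fP j) => _; apply; have := yq j; rewrite ffunE.
Qed.

Lemma measurable_fun_row dT (T : measurableType dT) (f : T -> borelRd R d) :
  (forall i, measurable_fun setT (fun x => (f x : V) ord0 i : R)) ->
  measurable_fun setT f.
Proof.
move=> mf; apply: (@measurability _ _ T (borelRd R d) setT f (@open V)) => //.
move=> _ [U oU <-]; rewrite (open_bigcup_rat_box oU) preimage_bigcup setTI.
apply: countable_bigcupT_measurable => [|q]; first exact: countableP.
have [qU|qU] := pselect (rat_box q `<=` U); last first.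
  rewrite (_ : _ @^-1` _ = set0); first exact: measurable0.
  by apply/seteqP; split => // x [].
have -> : f @^-1` [set x | rat_box q `<=` U /\ rat_box q x] =
    \bigcap_(i in [set: 'I_d])
      ((fun x => (f x : V) ord0 i : R) @^-1` `](ratr (q i).1), (ratr (q i).2)[).
  apply/seteqP; split => x /=; first by move=> [_ xq] i _ /=; rewrite in_itv; exact: xq.
  by move=> xq; split => // i; have := xq i I; rewrite /= in_itv.
apply: fin_bigcap_measurable => [|i _]; first exact: finite_finset.
by rewrite -[X in measurable X]setTI; apply: mf => //; exact: measurable_itv.
Qed.

Lemma measurable_closed (A : set V) : closed A -> measurable (A : set (borelRd R d)).
Proof.
move=> cA; rewrite -[A]setCK; apply: measurableC; apply: sub_sigma_algebra.
exact: closed_openC.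
Qed.

End borel_row.

Section cube_prob.
Variables (R : realType) (d : nat).
Local Notation mR := (measurableTypeR R).
Local Notation V := 'rV[R]_d.
Implicit Types (v : V) (e : R).

Definition cube v e : set V := box v (v + const_mx e).

Lemma cubeP v e y :
  cube v e y <-> forall i, v ord0 i <= y ord0 i <= v ord0 i + e.
Proof. by split => yc i; have := yc i; rewrite !mxE. Qed.

Definition cube_map v e (t : d.-tuple mR) : borelRd R d :=
  v + e *: \row_i (tnth t i : R).

Lemma cube_map_coord v e t i : (cube_map v e t : V) ord0 i = v ord0 i + e * tnth t i.
Proof. by rewrite !mxE. Qed.

Lemma measurable_cube_map v e : measurable_fun setT (cube_map v e).
Proof.
apply: measurable_fun_row => i.
rewrite (_ : (fun _ => _) = fun t => v ord0 i + e * (tnth t i : R)); last first.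
  by apply: funext => t; rewrite cube_map_coord.
apply/measurable_funD/measurable_funM; [exact: measurable_cst..|].
exact: measurable_tnth.
Qed.

HB.instance Definition _ v e :=
  isMeasurableFun.Build _ _ _ _ (cube_map v e) (measurable_cube_map v e).

Definition cube_prob v e : probability (borelRd R d) R :=
  distribution (unif_cube R d) (cube_map v e).

Lemma cube_probE v e A : cube_prob v e A = unif_cube R d (cube_map v e @^-1` A).
Proof. by []. Qed.

Lemma measurable_preimage_cube_map v e (A : set (borelRd R d)) : measurable A ->
  measurable (cube_map v e @^-1` A).
Proof. by move=> mA; rewrite -[X in measurable X]setTI; exact: measurable_cube_map. Qed.

Lemma preimage_cube_map_box v e a b : 0 < e -> cube_map v e @^-1` box a b =
  tbox (fun i => (a ord0 i - v ord0 i) / e) (fun i => (b ord0 i - v ord0 i) / e).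
Proof.
move=> e0; apply/seteqP; split => t /= tab i; have := tab i;
  rewrite ?cube_map_coord ler_pdivrMr // ler_pdivlMr //;
  by move: (tnth t i : R) => ? /andP [? ?]; apply/andP; split; lra.
Qed.

Lemma cube_prob_box_le v e a b : 0 < e ->
  (cube_prob v e (box a b) <= (box_vol a b * e^-1 ^+ d)%:E)%E.
Proof.
move=> e0; rewrite cube_probE preimage_cube_map_box //.
apply: le_trans (unif_cube_tbox_le _ _) _; rewrite lee_fin /box_vol.
have maxV x : Num.max 0 (x / e) = e^-1 * Num.max 0 x.
  by rewrite maxr_pMr ?invr_ge0 ?ltW // mulr0 mulrC.
under eq_bigr => i _ do rewrite -mulrBl opprB addrA subrK maxV.
by rewrite prodrMl card_ord mulrC.
Qed.

Lemma cube_prob_abs_continuous v e : 0 < e -> abs_continuous (cube_prob v e).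
Proof.
move=> e0 A mA nA; apply/eqP; rewrite -measure_le0.
apply/lee_addgt0Pr => eps eps0; rewrite add0e.
have ed0 : 0 < e ^+ d by rewrite exprn_gt0.
have [a [b [Acov vol_le]]] := nA (eps * e ^+ d) (mulr_gt0 eps0 ed0).
change (unif_cube R d (cube_map v e @^-1` A) <= eps%:E)%E.
apply: le_trans (@measure_sigma_subadditive _ _ _ (unif_cube R d) _
  (fun k => cube_map v e @^-1` box (a k) (b k)) _ _ _) _.
- by move=> k; rewrite preimage_cube_map_box //; exact: measurable_tbox.
- exact: measurable_preimage_cube_map.
- by move=> x /Acov.
pose bound k := ((e^-1 ^+ d)%:E * (box_vol (a k) (b k))%:E)%E.
apply: le_trans (lee_nneseries (v := bound) _ _) _.
- by move=> *; exact: measure_ge0.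
- by move=> k _; rewrite /bound -EFinM mulrC; exact: cube_prob_box_le.
rewrite /bound nneseriesZl; last first.
  by move=> k _; rewrite lee_fin; apply: prodr_ge0 => i _; rewrite le_max lexx.
apply: le_trans (lee_wpmul2l _ vol_le) _.
  by rewrite lee_fin exprn_ge0 // invr_ge0 ltW.
by rewrite -EFinM lee_fin exprVn mulrCA mulVf ?mulr1 // gt_eqF.
Qed.

Lemma cube_map_unit_tbox v e t : 0 <= e -> unit_tbox t -> cube v e (cube_map v e t).
Proof.
move=> e0 t01; apply/cubeP => i; rewrite cube_map_coord.
by have := t01 i; move: (tnth t i : R) => y /andP [? ?]; apply/andP; split; nra.
Qed.

Lemma cube_prob_neq0_meets v e (K : set (borelRd R d)) : 0 <= e -> measurable K ->
  cube_prob v e K != 0%E -> exists2 y, K y & cube v e y.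
Proof.
move=> e0 mK; apply: contra_neqP => Kcube; rewrite cube_probE.
have outside0 : unif_cube R d (~` unit_tbox) = 0%E.
  by rewrite probability_setC ?unif_cube_unit_tbox ?subee //; exact: measurable_tbox.
apply/eqP; rewrite -measure_le0 -outside0; apply: le_measure; rewrite ?inE.
- exact: measurable_preimage_cube_map.
- by apply: measurableC; exact: measurable_tbox.
move=> t Kt t01; apply: Kcube.
by exists (cube_map v e t) => //; exact: cube_map_unit_tbox.
Qed.

Lemma cube_prob_eq1 v e (K : set (borelRd R d)) : 0 <= e -> measurable K ->
  cube v e `<=` K -> cube_prob v e K = 1%E.
Proof.
move=> e0 mK cubeK; rewrite cube_probE; apply/eqP.
rewrite eq_le probability_le1 /=; last exact: measurable_preimage_cube_map.
apply: le_trans (_ : unif_cube R d unit_tbox <= _)%E.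
  by rewrite unif_cube_unit_tbox.
apply: le_measure; rewrite ?inE.
- exact: measurable_tbox.
- exact: measurable_preimage_cube_map.
by move=> t t01; apply: cubeK; exact: cube_map_unit_tbox.
Qed.

End cube_prob.

Lemma exists_singleton_fibre n r (l : 'I_n -> 'I_r) : (n < 2 * r)%N ->
  (forall s, exists i, l i = s) -> exists s i0, forall i, l i = s <-> i = i0.
Proof.
move=> nr l_surj.
have [s fibre_le1] : exists s, (#|[pred i | l i == s]| <= 1)%N.
  apply/existsP; apply: contraLR nr => /existsPn fibres_gt1; rewrite -leqNgt.
  rewrite -[n]card_ord -sum1_card (partition_big l predT) //= mulnC.
  rewrite -[r in (r * 2)%N]card_ord -sum_nat_const; apply: leq_sum => s _.
  by rewrite sum1_card ltnNge fibres_gt1.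
have [i0 li0] := l_surj s.
exists s, i0 => i; split => [li|-> //].
by apply: (card_le1_eqP fibre_le1); rewrite !inE ?li ?li0.
Qed.

Lemma equipartition_single_part (R : realType) d n r M
    (mu : 'I_M -> probability (borelRd R d) R) (K : 'I_n -> set 'rV[R]_d)
    (l : 'I_n -> 'I_r) : (n < 2 * r)%N -> (0 < M)%N ->
  (forall j s, mu j (\bigcup_(i in [set i | l i = s]) K i) = (r%:R^-1)%:E) ->
  exists i0, forall j, mu j (K i0) = (r%:R^-1)%:E.
Proof.
move=> nr M0 equi.
have r_inv_neq0 : (r%:R^-1 : R) != 0 by rewrite invr_eq0 pnatr_eq0 -lt0n; lia.
have l_surj s : exists i, l i = s.
  apply: contrapT => fibre0; move: (equi (Ordinal M0) s).
  rewrite (_ : \bigcup_(i in _) _ = set0) ?measure0; last first.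
    by apply/seteqP; split => // x [i /= li _]; apply: fibre0; exists i.
  by move/esym/eqP; rewrite eqe (negbTE r_inv_neq0).
have [s [i0 fibreE]] := exists_singleton_fibre nr l_surj.
exists i0 => j; rewrite -(equi j s); congr (mu j _).
apply/seteqP; split => [x Kx|x [i /= /fibreE -> //]].
by exists i0 => //=; exact/fibreE.
Qed.

Section probes.
Variables (R : realType) (d : nat).
Local Notation V := 'rV[R]_d.

Definition probe_side : R := (16 * d%:R ^+ 2)^-1.
Definition probe_mid : R := 8 * d%:R * probe_side.

(* [probe d] is the origin: no index [i < d] equals [d]. *)
Definition probe (j : nat) : V :=
  if (j <= d)%N then \row_i (i == j :> nat)%:R else const_mx probe_mid.

Lemma probe_side_gt0 : (0 < d)%N -> 0 < probe_side.
Proof. by move=> d0; rewrite invr_gt0 mulr_gt0 // exprn_gt0 // ltr0n. Qed.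

Lemma probe_side_mid_bounds : (0 < d)%N -> [/\ d%:R * probe_side <= 1/16,
  2 * probe_side <= probe_mid & d%:R * (probe_mid + probe_side) <= 9/16].
Proof.
move=> d0; have D1 : 1 <= d%:R :> R by rewrite ler1n.
have side_gt0 := probe_side_gt0 d0.
have side_dd : 16 * (d%:R * d%:R) * probe_side = 1.
  by rewrite /probe_side -expr2 mulfV // lt0r_neq0 // mulr_gt0 // exprn_gt0 // ltr0n.
rewrite /probe_mid; split; nra.
Qed.

Lemma probe_cube_sub_convex (K : set V) : (0 < d)%N -> convex_set K ->
  (forall j, (j <= d)%N -> exists2 y, K y & cube (probe j) probe_side y) ->
  cube (probe d.+1) probe_side `<=` K.
Proof.
move=> d0 cK hit y /cubeP ycube.
have side_gt0 := probe_side_gt0 d0.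
have [x0 Kx0 /cubeP x0cube] := hit d (leqnn d).
have hit_vertex (k : 'I_d) : exists p, K p /\ cube (probe k) probe_side p.
  by have [|p] := hit k; [exact: ltnW|exists p].
have [x xP] := choice hit_vertex.
have x0E i : 0 <= x0 ord0 i <= probe_side.
  by have := x0cube i; rewrite /probe leqnn mxE ltn_eqF // add0r.
have xE k i : (k == i)%:R <= x k ord0 i <= (k == i)%:R + probe_side.
  by case: (xP k) => _ /cubeP /(_ i); rewrite /probe ltnW // mxE eq_sym.
have yE i : probe_mid <= y ord0 i <= probe_mid + probe_side.
  by have := ycube i; rewrite /probe ltnn mxE.
have [side_le mid_ge mid_le] := probe_side_mid_bounds d0.
have [t [t0 t1 ->]] :=
  perturbed_simplex_hull (ltW side_gt0) side_le mid_ge mid_le x0E xE yE.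
by apply: convex_set_affine_comb => // k; case: (xP k).
Qed.

Lemma convex_cube_prob_probe_eq1 (K : set (borelRd R d)) : (0 < d)%N -> closed K ->
  convex_set K -> (forall j, (j <= d)%N -> cube_prob (probe j) probe_side K != 0%E) ->
  cube_prob (probe d.+1) probe_side K = 1%E.
Proof.
move=> d0 cK cvK pos; have mK := measurable_closed cK.
apply: cube_prob_eq1 => //; first exact/ltW/probe_side_gt0.
apply: probe_cube_sub_convex => // j jd.
by apply: cube_prob_neq0_meets (pos j jd) => //; exact/ltW/probe_side_gt0.
Qed.

End probes.

Theorem mainTheorem4 (R : realType) (d r : nat) :
  (1 <= d)%N -> (2 <= r)%N ->
  forall M : nat, equipart_property R d (2 * r - 1) r M -> (M <= d + 1)%N.
Proof.
move=> d0 r2 M equi; rewrite leqNgt; apply/negP => Mgt.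
pose mu (j : 'I_M) := cube_prob (probe R d j) (probe_side R d).
have [|K [[Kcc _ _] [l mu_l]]] := equi mu.
  by move=> j; exact/cube_prob_abs_continuous/probe_side_gt0.
have [||i0 mu_K] := equipartition_single_part _ _ mu_l; [lia|lia|].
have [Kcl Kcv] := Kcc i0.
have r_inv_gt0 : (0 < (r%:R^-1 : R)%:E)%E by rewrite lte_fin invr_gt0 ltr0n; lia.
have last_probe : (d.+1 < M)%N by lia.
have K_full : mu (Ordinal last_probe) (K i0) = 1%E.
  rewrite /mu /=; apply: convex_cube_prob_probe_eq1 => // j jd.
  by have := mu_K (Ordinal (_ : j < M)%N); rewrite /mu /= => ->; [rewrite gt_eqF|lia].
move: (mu_K (Ordinal last_probe)); rewrite K_full => /eqP.
by rewrite eqe eq_sym invr_eq1 pnatr_eq1; lia.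
Qed.
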